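(* Let $p$ be a prime and let $\widetilde{\mathcal{C}}$ be an $[n+k,n+k-m]$ linear code over $\mathbb{F}_p$ with parity check matrix $\widetilde{H}\in\mathbb{F}_p^{m\times(n+k)}$ (so $\widetilde{\mathcal{C}}^\perp$ is the row space of $\widetilde{H}$) of the form $$\widetilde{H} = \begin{pmatrix} -\mathbb{1}_k & \operatorname{H}_1\\ 0 & \operatorname{H}_0\end{pmatrix},$$ where $\mathbb{1}_k$ is the $k\times k$ identity and $\operatorname{H}_1\in\mathbb{F}_p^{k\times n}$, $\operatorname{H}_0\in\mathbb{F}_p^{(m-k)\times n}$. Suppose $\widetilde{\mathcal{C}}^\perp$ is triply-even and contains the all-ones vector. Then the matrix $\operatorname{H} = \begin{pmatrix}\operatorname{H}_1\\ \operatorname{H}_0\end{pmatrix}$, with rows $h^1,\dots,h^m$ (the first $k$ being the rows of $\operatorname{H}_1$), is tri-orthogonal. Furthermore, for all $1\le a\le k$, $\epsilon_a := \sum_i (h^a_i)^3 = 1\pmod p$ and $\sum_i (h^a_i)^2 = -1\pmod p$.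
   Context: A subspace $\mathcal{V}\subseteq\mathbb{F}_p^N$ is triply-even if $\sum_i u_iv_iw_i = 0\pmod p$ for all $u,v,w\in\mathcal{V}$. A matrix with rows $h^1,\dots,h^m\in\mathbb{F}_p^n$ is tri-orthogonal if $\sum_i h^a_ih^b_i = 0\pmod p$ for all $1\le a<b\le m$ and $\sum_i h^a_ih^b_ih^c_i = 0\pmod p$ for all $1\le a<b<c\le m$. *)

From HB Require Import structures.
From mathcomp Require Import all_boot all_order all_algebra.
Set Implicit Arguments. Unset Strict Implicit. Unset Printing Implicit Defensive.
Import GRing.Theory.
Local Open Scope ring_scope.

(* A subspace of F^N is represented as the row space of a matrix V. *)
Definition triply_even (F : fieldType) (r N : nat) (V : 'M[F]_(r, N)) : Prop :=
  forall u v w : 'rV[F]_N, (u <= V)%MS -> (v <= V)%MS -> (w <= V)%MS ->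
    \sum_(i < N) u 0 i * v 0 i * w 0 i = 0.

Definition tri_orthogonal (F : fieldType) (m n : nat) (H : 'M[F]_(m, n)) : Prop :=
  (forall a b : 'I_m, (a < b)%N -> \sum_(i < n) H a i * H b i = 0) /\
  (forall a b c : 'I_m, (a < b)%N -> (b < c)%N ->
     \sum_(i < n) H a i * H b i * H c i = 0).

Definition Htilde (F : fieldType) (k l n : nat)
  (H1 : 'M[F]_(k, n)) (H0 : 'M[F]_(l, n)) : 'M[F]_(k + l, k + n) :=
  block_mx (- 1%:M) H1 0 H0.

From HB Require Import structures.
From mathcomp Require Import all_boot all_order all_algebra.
Set Implicit Arguments. Unset Strict Implicit. Unset Printing Implicit Defensive.
Import GRing.Theory.
Local Open Scope ring_scope.

(* Row r of Htilde is (-e_r, h^r), with e_r = 0 when r >= k.  Triple-evenness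
   applied to rows r1, r2, r3 says that sum_i h^r1_i h^r2_i h^r3_i equals the
   contribution [r1 = r2 = r3 < k] of the identity block, and applied to the
   all-ones vector and rows r1, r2 that sum_i h^r1_i h^r2_i = -[r1 = r2 < k].
   Distinct indices give tri-orthogonality, equal indices below k give
   eps_a = 1 and sum_i (h^a_i)^2 = -1. *)

Section TriplyEven.
Variables (F : fieldType) (r N : nat) (V : 'M[F]_(r, N)).
Hypothesis V3 : triply_even V.

Lemma triply_even_rows (r1 r2 r3 : 'I_r) :
  \sum_(i < N) V r1 i * V r2 i * V r3 i = 0.
Proof.
have := V3 (row_sub r1 V) (row_sub r2 V) (row_sub r3 V).
by under eq_bigr do rewrite !mxE.
Qed.

Lemma triply_even_sub_rows (u : 'rV[F]_N) (r1 r2 : 'I_r) : (u <= V)%MS ->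
  \sum_(i < N) u 0 i * V r1 i * V r2 i = 0.
Proof.
move=> uV; have := V3 uV (row_sub r1 V) (row_sub r2 V).
by under eq_bigr do rewrite !mxE.
Qed.

End TriplyEven.

Lemma sum_ord_indicator (R : pzSemiRingType) (b : bool) (k r : nat) :
  \sum_(j < k) (b && (r == j :> nat))%:R = (b && (r < k)%N)%:R :> R.
Proof.
case: b; last by rewrite big1.
case: (ltnP r k) => [rk | kr].
  rewrite (bigD1 (Ordinal rk)) //= eqxx big1 ?addr0 // => j.
  by rewrite -val_eqE eq_sym => /negbTE ->.
by rewrite big1 // => j _; rewrite gtn_eqF // (leq_trans (ltn_ord j)).
Qed.

Section HtildeSums.
Variables (F : fieldType) (k l n : nat) (H1 : 'M[F]_(k, n)) (H0 : 'M[F]_(l, n)).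
Local Notation T := (Htilde H1 H0).
Local Notation H := (col_mx H1 H0).

Lemma Htilde_lshift (r : 'I_(k + l)) (j : 'I_k) :
  T r (lshift n j) = - (r == j :> nat)%:R.
Proof.
rewrite /Htilde -(splitK r); case: (split r) => r' /=.
  by rewrite block_mxEul !mxE.
rewrite block_mxEdl mxE gtn_eqF ?oppr0 //.
exact: leq_trans (ltn_ord j) (leq_addr _ _).
Qed.

Lemma Htilde_rshift (r : 'I_(k + l)) (i : 'I_n) : T r (rshift k i) = H r i.
Proof.
rewrite /Htilde -(splitK r); case: (split r) => r' /=.
  by rewrite block_mxEur col_mxEu.
by rewrite block_mxEdr col_mxEd.
Qed.

Lemma sum_Htilde_rows3 (r1 r2 r3 : 'I_(k + l)) :
  \sum_(i < k + n) T r1 i * T r2 i * T r3 i =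
  \sum_(i < n) H r1 i * H r2 i * H r3 i - [&& r1 == r2, r2 == r3 & (r1 < k)%N]%:R.
Proof.
rewrite big_split_ord /= addrC; congr (_ + _).
  by apply: eq_bigr => i _; rewrite !Htilde_rshift.
rewrite andbA -(sum_ord_indicator F) -sumrN; apply: eq_bigr => j _.
rewrite !Htilde_lshift mulrNN mulrN -!natrM !mulnb; congr (- (nat_of_bool _)%:R).
rewrite -[r1 == r2]/(r1 == r2 :> nat) -[r2 == r3]/(r2 == r3 :> nat).
by apply/idP/idP => /andP[/andP[/eqP-> /eqP->] /eqP->]; rewrite !eqxx.
Qed.

Lemma sum_Htilde_ones_rows2 (r1 r2 : 'I_(k + l)) :
  \sum_(i < k + n) (const_mx 1 : 'rV[F]_(k + n)) 0 i * T r1 i * T r2 i =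
  \sum_(i < n) H r1 i * H r2 i + ((r1 == r2) && (r1 < k)%N)%:R.
Proof.
rewrite big_split_ord /= addrC; congr (_ + _).
  by apply: eq_bigr => i _; rewrite !Htilde_rshift mxE mul1r.
rewrite -(sum_ord_indicator F); apply: eq_bigr => j _.
rewrite !Htilde_lshift mxE mul1r mulrNN -natrM mulnb; congr ((nat_of_bool _)%:R).
rewrite -[r1 == r2]/(r1 == r2 :> nat).
by apply/idP/idP => /andP[/eqP-> /eqP->]; rewrite !eqxx.
Qed.

Lemma col_mx_cubes (T3 : triply_even T) (r1 r2 r3 : 'I_(k + l)) :
  \sum_(i < n) H r1 i * H r2 i * H r3 i = [&& r1 == r2, r2 == r3 & (r1 < k)%N]%:R.
Proof.
by apply/eqP; rewrite -subr_eq0 -sum_Htilde_rows3 triply_even_rows.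
Qed.

Lemma col_mx_squares (T3 : triply_even T)
    (T1 : ((const_mx 1 : 'rV[F]_(k + n)) <= T)%MS) (r1 r2 : 'I_(k + l)) :
  \sum_(i < n) H r1 i * H r2 i = - ((r1 == r2) && (r1 < k)%N)%:R.
Proof.
by apply/eqP; rewrite -addr_eq0 -sum_Htilde_ones_rows2 triply_even_sub_rows.
Qed.

End HtildeSums.

Theorem lemma4 (p k l n : nat) (pr_p : prime p)
  (H1 : 'M['F_p]_(k, n)) (H0 : 'M['F_p]_(l, n)) :
  row_free (Htilde H1 H0) ->
  triply_even (Htilde H1 H0) ->
  ((const_mx 1 : 'rV['F_p]_(k + n)) <= Htilde H1 H0)%MS ->
  tri_orthogonal (col_mx H1 H0) /\
  (forall a : 'I_k,
     \sum_(i < n) H1 a i ^+ 3 = 1 /\ \sum_(i < n) H1 a i ^+ 2 = -1).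
Proof.
(* Full rank of Htilde only fixes the dimension of the code. *)
move=> _ T3 T1.
have cubes := col_mx_cubes T3; have squares := col_mx_squares T3 T1.
split; first split.
- by move=> a b ab; rewrite squares (ltn_eqF ab : (a == b) = false) oppr0.
- by move=> a b c ab _; rewrite cubes (ltn_eqF ab : (a == b) = false).
move=> a; split.
- have := cubes (lshift l a) (lshift l a) (lshift l a).
  rewrite eqxx /= ltn_ord mulr1n => <-; apply: eq_bigr => i _.
  by rewrite col_mxEu -mulrA -expr2 -exprS.
- have := squares (lshift l a) (lshift l a).
  rewrite eqxx /= ltn_ord mulr1n => <-; apply: eq_bigr => i _.
  by rewrite col_mxEu -expr2.
Qed.
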